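(* Let $\{Q(C;\alpha)\}$ be a filtration of simplicial complexes on a finite set $C$. For every $\alpha\ge0$, the inclusion $\mathrm{HoPeS}(C;\alpha)\to Q(C;\alpha)$ induces an isomorphism $H_1(\mathrm{HoPeS}(C;\alpha);\mathbb{Z}_2)\to H_1(Q(C;\alpha);\mathbb{Z}_2)$.
   Context: A filtration on a finite set $C$: nested finite simplicial complexes $Q(C;\alpha)$, $\alpha\ge0$, with vertex set $C$, $Q(C;0)=C$, each simplex entering at a minimal scale; the final complex is connected. Edge length $|e|=2\min\{\alpha:e\subset Q(C;\alpha)\}$. $\mathrm{MST}(C)$ is a minimum total length spanning tree on $C$ using edges of the filtration; $\mathrm{MST}(C;\alpha)$ removes from it all open edges of length $>2\alpha$. Homology with $\mathbb{Z}_2$ coefficients. An edge is critical if its addition creates a new class in $H_1$ that does not immediately die; its birth is its entry scale. Deaths of critical edges: at scale $\alpha$, let $K_1,\dots,K_s$ be the critical edges with birth $\le\alpha$ not yet assigned a death; $[K_1],\dots,[K_s]$ form a basis of $H_1((\mathrm{MST}(C;\alpha)\cup\bigcup K_j)/\mathrm{MST}(C;\alpha))$; let $f$ be the map into $H_1(Q(C;\alpha)/\mathrm{MST}(C;\alpha))$ induced by inclusion; take a basis $b_1,\dots,b_r$ of $\ker f$, $b_i=\sum_j c_{ij}[K_j]$, and solve $\sum_j c_{ij}x_j=0$ over $\mathbb{Z}_2$ with $r$ leading variables chosen by the elder rule (the leading set whose critical edges have greatest combined birth); each $K_i$ with $i$ leading gets death $\alpha$. $\mathrm{HoPeS}(C)$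 is the union of $\mathrm{MST}(C)$ and all critical edges labelled by (birth, death). The reduced skeleton $\mathrm{HoPeS}(C;\alpha)$ is obtained from $\mathrm{HoPeS}(C)$ by removing all edges of length $>2\alpha$ and all critical edges with death $\le\alpha$. *)

From HB Require Import structures.
From mathcomp Require Import all_boot all_order all_algebra.
Set Implicit Arguments. Unset Strict Implicit. Unset Printing Implicit Defensive.
Import Order.TTheory GRing.Theory Num.Theory.
Local Open Scope ring_scope.

(* Symmetric difference = addition of Z_2-chains represented as sets. *)
Definition sdiff (T : finType) (A B : {set T}) : {set T} := (A :\: B) :|: (B :\: A).

Section HoPeS.
Variable R : realFieldType.
Variable C : finType.

(* A simplex is a nonempty subset of C; a complex is a set of simplices. *)
Definition is_edge (e : {set C}) : bool := #|e| == 2%N.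
Definition is_tri (t : {set C}) : bool := #|t| == 3%N.
Definition edges (S : {set {set C}}) := [set e in S | is_edge e].
Definition tris (S : {set {set C}}) := [set t in S | is_tri t].

Definition bd2 (Tr : {set {set C}}) : {set {set C}} :=
  [set e | is_edge e & odd #|[set t in Tr | e \subset t]|].

Definition cycle1 (S z : {set {set C}}) : Prop :=
  z \subset edges S /\ forall v : C, ~~ odd #|[set e in z | v \in e]|.
Definition bound1 (S z : {set {set C}}) : Prop :=
  exists Tr : {set {set C}}, Tr \subset tris S /\ z = bd2 Tr.

(* The inclusion A -> B (A a subcomplex of B) induces an isomorphism
   H_1(A;Z_2) -> H_1(B;Z_2): the induced map [z] |-> [z] is injective
   (trivial kernel) and surjective. *)
Definition H1_incl_iso (A B : {set {set C}}) : Prop :=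
  [/\ A \subset B,
      (forall z : {set {set C}}, cycle1 A z -> bound1 B z -> bound1 A z) &
      (forall z : {set {set C}}, cycle1 B z -> exists z', cycle1 A z' /\ bound1 B (sdiff z z'))].

(* A filtration is given by the final complex K and the entry scale of every
   simplex; Q(C;alpha) = simplices of K of entry scale <= alpha. *)
Definition is_filtration (K : {set {set C}}) (ent : {set C} -> R) : Prop :=
  [/\ forall s : {set C}, s \in K -> s != set0,
      forall s t : {set C}, s \in K -> t \subset s -> t != set0 -> t \in K /\ ent t <= ent s,
      forall x : C, [set x] \in K /\ ent [set x] = 0,
      (* Q(C;0) = C *)
      forall s : {set C}, s \in K -> (1 < #|s|)%N -> 0 < ent s &
      forall x y : C, connect (fun u v => [set u; v] \in edges K) x y].

Definition Q (K : {set {set C}}) (ent : {set C} -> R) (a : R) : {set {set C}} :=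
  [set s in K | ent s <= a].

(* edge length |e| = 2 min{alpha : e in Q(C;alpha)} *)
Definition elen (ent : {set C} -> R) (e : {set C}) : R := 2%:R * ent e.

Definition adj (E : {set {set C}}) : rel C := fun u v => [set u; v] \in E.

Definition spanning_tree (K T : {set {set C}}) : Prop :=
  [/\ T \subset edges K,
      forall x y : C, connect (adj T) x y &
      ~ (exists p : seq C, [/\ uniq p, (2 < size p)%N & cycle (adj T) p])].

Definition is_MST (K : {set {set C}}) (ent : {set C} -> R) (T : {set {set C}}) : Prop :=
  spanning_tree K T /\
  forall T' : {set {set C}}, spanning_tree K T' -> \sum_(e in T) elen ent e <= \sum_(e in T') elen ent e.

(* An order in which simplices are added one at a time, compatible with the
   filtration (scales, and faces before cofaces). *)
Definition compatible_order (K : {set {set C}}) (ent : {set C} -> R) (rk : {set C} -> nat) : Prop :=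
  [/\ {in K &, injective rk},
      forall s t : {set C}, s \in K -> t \in K -> ent s < ent t -> (rk s < rk t)%N &
      forall s t : {set C}, s \in K -> t \in K -> t \proper s -> (rk t < rk s)%N].

Definition before (K : {set {set C}}) (rk : {set C} -> nat) (e : {set C}) :=
  [set s in K | (rk s < rk e)%N].

(* adding e creates a new 1-cycle *)
Definition positive (K : {set {set C}}) (rk : {set C} -> nat) (e : {set C}) : Prop :=
  exists z : {set {set C}}, cycle1 (e |: before K rk e) z /\ e \in z.

(* critical edge: its addition creates a new class in H_1 that does not die at
   the same scale (i.e. is not, at scale ent e, homologous to an older cycle) *)
Definition critical (K : {set {set C}}) (ent : {set C} -> R) (rk : {set C} -> nat)
    (e : {set C}) : Prop :=
  e \in edges K /\
  exists z : {set {set C}}, [/\ cycle1 (e |: before K rk e) z, e \in z &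
    forall z' : {set {set C}}, cycle1 (before K rk e) z' -> ~ bound1 (Q K ent (ent e)) (sdiff z z')].

Definition MSTa (ent : {set C} -> R) (T : {set {set C}}) (a : R) :=
  [set e in T | elen ent e <= 2%:R * a].

(* critical edges with birth <= alpha not yet assigned a death (death < alpha) *)
Definition Uset (ent : {set C} -> R) (Crit : {set {set C}}) (d : {set C} -> option R) (a : R) :=
  [set e in Crit | (ent e <= a) && ~~ (if d e is Some b then b < a else false)].

(* ker f : combinations (subsets w of U) of classes [K_j] that vanish in
   H_1(Q(C;alpha)/MST(C;alpha)) *)
Definition in_kerf (K : {set {set C}}) (ent : {set C} -> R) (T : {set {set C}}) (a : R)
    (U w : {set {set C}}) : Prop :=
  w \subset U /\
  exists Tr : {set {set C}}, Tr \subset tris (Q K ent a) /\ sdiff w (bd2 Tr) \subset MSTa ent T a.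

(* solutions x (subsets of U = Z_2 vectors) of the system sum_j c_ij x_j = 0 *)
Definition solution (W : {set {set C}} -> Prop) (U x : {set {set C}}) : Prop :=
  x \subset U /\ forall w : {set {set C}}, W w -> ~~ odd #|x :&: w|.

(* L is a set of leading variables: every choice of the free variables
   (those in U \ L) extends to a unique solution. *)
Definition leading (W : {set {set C}} -> Prop) (U L : {set {set C}}) : Prop :=
  L \subset U /\
  forall y : {set {set C}}, y \subset U :\: L -> exists! x : {set {set C}}, solution W U x /\ x :\: L = y.

Definition elder (W : {set {set C}} -> Prop) (U L : {set {set C}}) (birth : {set C} -> R) : Prop :=
  leading W U L /\
  forall L' : {set {set C}}, leading W U L' -> \sum_(e in L') birth e <= \sum_(e in L) birth e.

(* d e = Some b : death b ; d e = None : never dies.  Birth = entry scale. *)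
Definition valid_deaths (K : {set {set C}}) (ent : {set C} -> R) (T Crit : {set {set C}})
    (d : {set C} -> option R) : Prop :=
  (forall a, 0 <= a ->
     elder (in_kerf K ent T a (Uset ent Crit d a)) (Uset ent Crit d a)
           [set e in Uset ent Crit d a | d e == Some a] ent) /\
  (forall (e : {set C}) (b : R), e \in Crit -> d e = Some b -> 0 <= b /\ ent e <= b).

Definition HoPeSa (K : {set {set C}}) (ent : {set C} -> R) (T Crit : {set {set C}})
    (d : {set C} -> option R) (a : R) : {set {set C}} :=
  [set s in K | #|s| == 1%N] :|: MSTa ent T a :|:
  [set e in Crit | (elen ent e <= 2%:R * a) && ~~ (if d e is Some b then b <= a else false)].

End HoPeS.

From HB Require Import structures.
From mathcomp Require Import all_boot all_order all_algebra.
From Stdlib Require Import Classical.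
Import Order.TTheory GRing.Theory Num.Theory.
Set Implicit Arguments. Unset Strict Implicit. Unset Printing Implicit Defensive.

(* Z_2-chains are finite sets, addition being symmetric difference.
   1. Linear algebra over Z_2: a subspace is recovered from its orthogonal complement
      (separation).  Hence, for a homogeneous system with leading variables L, each
      leading variable e has an equation meeting L exactly in e (leading_pivot), and no
      nonzero equation is supported on the free variables (free_kernel_trivial).
   2. Boundaries of triangles are 1-cycles (bd2_even).
   3. Surjectivity: every edge of Q(C;a) is homologous in Q(C;a) to a chain of HoPeS(C;a),
      by induction on the insertion rank.  Tree edges and living critical edges lie in
      HoPeS(C;a); a non-critical positive edge is homologous to earlier edges; a critical
      edge that died by a is, by leading_pivot at its death, homologous to MST edges and
      critical edges dying later (induction on the number of those).
   4. Injectivity: the critical part of a cycle of HoPeS(C;a) bounding in Q(C;a) is a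
      kernel vector on free variables, hence zero, and a cycle inside the tree vanishes. *)


Section Z2Chains.
Variable T : finType.
Implicit Types A B X Y : {set T}.

Lemma in_sdiff A B x : (x \in sdiff A B) = (x \in A) (+) (x \in B).
Proof. by rewrite !inE; case: (x \in A); case: (x \in B). Qed.

Lemma sdiffC A B : sdiff A B = sdiff B A.
Proof. by apply/setP=> x; rewrite !in_sdiff addbC. Qed.

Lemma sdiffA A B X : sdiff A (sdiff B X) = sdiff (sdiff A B) X.
Proof. by apply/setP=> x; rewrite !in_sdiff addbA. Qed.

Lemma sdiff0 A : sdiff A set0 = A.
Proof. by apply/setP=> x; rewrite in_sdiff inE addbF. Qed.

Lemma sdiffvv A : sdiff A A = set0.
Proof. by apply/setP=> x; rewrite in_sdiff inE addbb. Qed.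

Lemma sdiffK A B : sdiff (sdiff A B) B = A.
Proof. by apply/setP=> x; rewrite !in_sdiff -addbA addbb addbF. Qed.

Lemma sdiffACA A B X Y : sdiff (sdiff A B) (sdiff X Y) = sdiff (sdiff A X) (sdiff B Y).
Proof. by apply/setP=> x; rewrite !in_sdiff addbACA. Qed.

Lemma sdiff_sub A B X : A \subset X -> B \subset X -> sdiff A B \subset X.
Proof. by move=> sAX sBX; rewrite subUset !(subset_trans (subsetDl _ _)). Qed.

Lemma sdiff_pred A B (p : pred T) :
  [set x in sdiff A B | p x] = sdiff [set x in A | p x] [set x in B | p x].
Proof.
by apply/setP=> x; rewrite !(inE, in_sdiff); case: (x \in A); case: (x \in B); case: (p x).
Qed.

Lemma sdiffI A B X : sdiff A B :&: X = sdiff (A :&: X) (B :&: X).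
Proof. by apply/setP=> x; rewrite !(inE, in_sdiff); case: (x \in X); rewrite ?andbF ?andbT. Qed.

Lemma odd_sdiff A B : odd #|sdiff A B| = odd #|A| (+) odd #|B|.
Proof.
rewrite /sdiff cardsU (_ : (A :\: B) :&: (B :\: A) = set0); last first.
  by apply/setP=> x; rewrite !inE; case: (x \in A); case: (x \in B).
rewrite cards0 subn0 oddD -(cardsID B A) -(cardsID A B) (setIC B A) !oddD.
by rewrite addbACA addbb.
Qed.

Definition dot A B : bool := odd #|A :&: B|.

Lemma dotC A B : dot A B = dot B A.
Proof. by rewrite /dot setIC. Qed.

Lemma dot_sdiffr A B X : dot X (sdiff A B) = dot X A (+) dot X B.
Proof. by rewrite /dot setIC sdiffI odd_sdiff !(setIC X). Qed.

Lemma dot_sdiffl A B X : dot (sdiff A B) X = dot A X (+) dot B X.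
Proof. by rewrite /dot sdiffI odd_sdiff. Qed.

Lemma dot1 f B : dot [set f] B = (f \in B).
Proof.
rewrite /dot; case fB: (f \in B); first by rewrite (setIidPl _) ?sub1set ?fB // cards1.
by rewrite (_ : _ :&: _ = set0) ?cards0 //; apply/eqP; rewrite setI_eq0 disjoints1 fB.
Qed.

Lemma dot_setIr A B X : A \subset X -> dot A (B :&: X) = dot A B.
Proof. by move=> sAX; rewrite /dot (setIC B) setIA (setIidPl sAX). Qed.

Lemma setU1_sdiff f A : f \notin A -> f |: A = sdiff [set f] A.
Proof.
move=> fA; apply/setP=> y; rewrite in_sdiff !inE.
by case: eqP => [->|]; rewrite ?(negbTE fA).
Qed.

Lemma sdiff_setD1 A x : x \in A -> sdiff (A :\ x) A = [set x].
Proof.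
move=> xA; apply/setP=> y; rewrite in_sdiff !inE.
by case: eqP => [->|_] /=; rewrite ?xA ?addbb.
Qed.

Definition zsubspace (V : {set T} -> Prop) : Prop :=
  V set0 /\ forall x y, V x -> V y -> V (sdiff x y).

Lemma subspace_span (V : {set T} -> Prop) A :
  zsubspace V -> (forall x, x \in A -> V [set x]) -> V A.
Proof.
move=> [V0 VD]; have [n] := ubnP #|A|; elim: n A => // n IH A ltA VA.
have [->|[t tA]] := set_0Vmem A; first exact: V0.
have -> : A = sdiff [set t] (A :\ t) by rewrite -setU1_sdiff ?setD11 ?setD1K.
apply: VD; first exact: VA.
apply: IH => [|x /setD1P [_]]; last exact: VA.
by rewrite (cardsD1 t A) tA in ltA.
Qed.

Definition orth (V : {set T} -> Prop) (x : {set T}) : Prop := forall w, V w -> ~~ dot x w.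

(* Gaussian pivot step: if w0 in V contains f, a chain orthogonal to the part of V
   avoiding f can be corrected at f into a chain orthogonal to all of V. *)
Lemma orth_pivot (V : {set T} -> Prop) (x w0 : {set T}) (f : T) :
  zsubspace V -> V w0 -> f \in w0 -> f \notin x ->
  orth (fun w => V w /\ f \notin w) x ->
  exists xh, [/\ orth V xh, xh \subset f |: x
              & forall y : {set T}, f \notin y -> dot xh y = dot x y].
Proof.
move=> [_ VD] Vw0 fw0 fx ox.
have dot_xh y : dot (if dot x w0 then f |: x else x) y = dot x y (+) dot x w0 && (f \in y).
  case: (dot x w0); last by rewrite addbF.
  by rewrite setU1_sdiff // dot_sdiffl dot1 addbC.
exists (if dot x w0 then f |: x else x); split => [w Vw||y fy].
- rewrite dot_xh; case fw: (f \in w); last by rewrite andbF addbF; apply: ox; rewrite fw.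
  have := ox (sdiff w w0) (conj (VD _ _ Vw Vw0) _).
  rewrite in_sdiff fw fw0 dot_sdiffr => /(_ isT).
  by case: (dot x w); case: (dot x w0).
- by case: (dot x w0); rewrite ?subsetUr.
- by rewrite dot_xh (negbTE fy) andbF addbF.
Qed.

(* Separation (V = V^{perp perp}): a chain u of P(U) outside the subspace V is
   detected by a chain of P(U) orthogonal to V. *)
Lemma separation (V : {set T} -> Prop) (U u : {set T}) :
  zsubspace V -> (forall w, V w -> w \subset U) -> u \subset U -> ~ V u ->
  exists x : {set T}, [/\ x \subset U, orth V x & dot x u].
Proof.
have [n] := ubnP #|U|; elim: n V U u => // n IH V U u ltU sV VU uU Vu.
have [U0|[f fU]] := set_0Vmem U.
  by case: Vu; rewrite (_ : u = set0); [case: sV | apply/eqP; rewrite -subset0 -U0].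
have ltU' : #|U :\ f| < n by rewrite (cardsD1 f U) fU in ltU.
have sub_Uf (w : {set T}) : w \subset U -> f \notin w -> w \subset U :\ f.
  by move=> wU fw; rewrite subsetD1 wU.
have [[w0 [Vw0 fw0]]|noVf] := classic (exists w, V w /\ f \in w).
- pose u' := if f \in u then sdiff u w0 else u.
  have fu' : f \notin u' by rewrite /u'; case fu: (f \in u); rewrite ?in_sdiff ?fu ?fw0.
  have sV' : zsubspace (fun w => V w /\ f \notin w).
    case: sV => V0 VD; split => [|x y [Vx fx] [Vy fy]]; first by rewrite inE.
    by rewrite in_sdiff (negbTE fx) (negbTE fy); split => //; apply: VD.
  have u'U : u' \subset U by rewrite /u'; case: (f \in u) => //; apply: sdiff_sub (VU _ Vw0).
  have V'U w : V w /\ f \notin w -> w \subset U :\ f.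
    by move=> [Vw fw]; apply: sub_Uf (VU _ Vw) fw.
  have V'u' : ~ (V u' /\ f \notin u').
    move=> [Vu' _]; apply: Vu; move: Vu'; rewrite /u'; case: (f \in u) => // Vu'.
    by rewrite -(sdiffK u w0); case: sV => _; apply.
  have [x [xU ox dxu]] := IH _ (U :\ f) u' ltU' sV' V'U (sub_Uf _ u'U fu') V'u'.
  have fx : f \notin x by apply/negP => /(subsetP xU); rewrite setD11.
  have [xh [oxh xhU dxh]] := orth_pivot sV Vw0 fw0 fx ox.
  exists xh; split => //.
    by apply: subset_trans xhU _; rewrite subUset sub1set fU (subset_trans xU) ?subD1set.
  have : dot xh u' by rewrite dxh.
  rewrite /u'; case: (f \in u) => //.
  by rewrite dot_sdiffr (negbTE (oxh _ Vw0)) addbF.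
- have ofw w : V w -> f \notin w by move=> Vw; apply/negP => fw; apply: noVf; exists w.
  have [fu|fu] := boolP (f \in u).
    by exists [set f]; rewrite sub1set dot1; split => // w Vw; rewrite dot1 ofw.
  have [x [xU ox dxu]] := IH V (U :\ f) u ltU' sV (fun w Vw => sub_Uf _ (VU _ Vw) (ofw _ Vw))
    (sub_Uf _ uU fu) Vu.
  by exists x; rewrite (subset_trans xU) ?subD1set.
Qed.

End Z2Chains.

Section Leading.
Variable C : finType.

Lemma leading_pivot (W : {set {set C}} -> Prop) (U L : {set {set C}}) (e : {set C}) :
  zsubspace W -> leading W U L -> e \in L -> exists w, W w /\ w :&: L = [set e].
Proof.
move=> [W0 WD] [LU lead] eL.
pose V p := exists w, W w /\ p = w :&: L.
apply: NNPP => noW; have [] := separation (V := V) (U := L) (u := [set e]) _ _ _ _.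
- split; first by exists set0; rewrite set0I.
  move=> _ _ [w1 [Ww1 ->]] [w2 [Ww2 ->]]; exists (sdiff w1 w2).
  by rewrite sdiffI; split => //; apply: WD.
- by move=> _ [w [_ ->]]; apply: subsetIr.
- by rewrite sub1set.
- by move=> [w [Ww we]]; apply: noW; exists w.
move=> x [xL ox]; rewrite dotC dot1 => ex.
have [x0 [_ uniq0]] := lead set0 (sub0set _).
have solx : solution W U x /\ x :\: L = set0.
  split; last by apply/eqP; rewrite setD_eq0.
  split=> [|w Ww]; first exact: subset_trans xL LU.
  by rewrite -/(dot x w) -(dot_setIr w xL); apply: ox; exists w.
have sol0 : solution W U set0 /\ set0 :\: L = set0.
  by rewrite set0D; split=> //; split=> [|w _]; rewrite ?sub0set ?set0I ?cards0.
by move: ex; rewrite -(uniq0 _ solx) (uniq0 _ sol0) inE.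
Qed.

(* Dually, an element of W supported on free variables vanishes: otherwise the unique
   solution whose free part is one of its elements would not be orthogonal to it. *)
Lemma free_kernel_trivial (W : {set {set C}} -> Prop) (U L w : {set {set C}}) :
  leading W U L -> W w -> w \subset U :\: L -> w = set0.
Proof.
move=> [_ lead] Ww wUL; have [//|[f fw]] := set_0Vmem w.
have fUL : [set f] \subset U :\: L by rewrite sub1set (subsetP wUL).
have [x [[[_ xperp] xf] _]] := lead _ fUL.
have xw : x :&: w = [set f].
  apply/setP => y; rewrite !inE; have [->|yf] := eqVneq y f.
    by rewrite fw andbT (subsetP (subsetDl x L)) // xf set11.
  apply/negbTE/andP => -[yx yw].
  have yL : y \notin L by move: (subsetP wUL y yw); rewrite inE => /andP [].
  have : y \in x :\: L by rewrite inE yL yx.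
  by rewrite xf inE (negbTE yf).
by have := xperp w Ww; rewrite xw cards1.
Qed.

End Leading.

Section Boundary.
Variable C : finType.
Implicit Types Tr : {set {set C}}.

Lemma bd2_sdiff Tr1 Tr2 : bd2 (sdiff Tr1 Tr2) = sdiff (bd2 Tr1) (bd2 Tr2).
Proof.
by apply/setP=> e; rewrite in_sdiff !inE sdiff_pred odd_sdiff; case: (is_edge e).
Qed.

Lemma bd2_0 : bd2 (set0 : {set {set C}}) = set0.
Proof.
apply/setP=> e; rewrite !inE (_ : [set t in set0 | _] = set0) ?cards0 ?andbF //.
by apply/setP=> t; rewrite !inE.
Qed.

Lemma bd2_simplex (t : {set C}) : bd2 [set t] = [set e | is_edge e & e \subset t].
Proof.
apply/setP=> e; rewrite !inE; case: (is_edge e) => //=.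
case et: (e \subset t).
  rewrite (_ : [set _ in _ | _] = [set t]) ?cards1 //.
  by apply/setP=> s; rewrite !inE; case: eqP => // ->.
rewrite (_ : [set _ in _ | _] = set0) ?cards0 //.
by apply/setP=> s; rewrite !inE; case: eqP => // ->.
Qed.

Lemma card_edges_at (t : {set C}) (v : C) : v \in t ->
  #|[set e | is_edge e & (e \subset t) && (v \in e)]| = #|t|.-1.
Proof.
move=> vt; rewrite (cardsD1 v t) vt /= -(card_in_imset (f := fun u => [set v; u])); last first.
  move=> u1 u2; rewrite !inE => /andP [u1v _] _ /setP /(_ u1).
  by rewrite !inE eqxx orbT (negbTE u1v) /= => /esym /eqP.
apply: eq_card => e; rewrite inE; apply/idP/imsetP.
- move=> /and3P [/eqP e2 et ve].
  have /cards1P [u eu] : #|e :\ v| == 1%N by move: e2; rewrite (cardsD1 v e) ve => -[] /eqP.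
  have : u \in e :\ v by rewrite eu set11.
  rewrite !inE => /andP [uv ue]; exists u; first by rewrite !inE uv (subsetP et).
  by rewrite -eu setD1K.
- move=> [u]; rewrite !inE => /andP [uv ut] ->.
  rewrite /is_edge cards2 (eq_sym v u) uv /= !inE eqxx /= andbT.
  by apply/subsetP=> y; rewrite !inE => /orP [] /eqP ->.
Qed.

Lemma bd2_even Tr (v : C) : (forall t, t \in Tr -> is_tri t) ->
  ~~ odd #|[set e in bd2 Tr | v \in e]|.
Proof.
move=> Trtri; pose P X := ~~ odd #|[set e in bd2 X | v \in e]|.
apply: (subspace_span (V := P)) => [|t /Trtri /eqP t3].
  split=> [|x y]; rewrite /P ?bd2_sdiff ?sdiff_pred ?odd_sdiff.
    by rewrite bd2_0 (_ : [set _ in set0 | _] = set0) ?cards0 //; apply/setP=> e; rewrite !inE.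
  by move=> /negbTE -> /negbTE ->.
rewrite /P; have -> : [set e in bd2 [set t] | v \in e] =
                     [set e | is_edge e & (e \subset t) && (v \in e)].
  by apply/setP=> e; rewrite bd2_simplex !inE andbA.
case vt: (v \in t); first by rewrite card_edges_at ?t3.
rewrite (_ : [set _ | _] = set0) ?cards0 //; apply/setP=> e; rewrite !inE.
by apply/negbTE/and3P => -[_ /subsetP et /et]; rewrite vt.
Qed.

End Boundary.

Local Open Scope ring_scope.

Section Skeleton.
Variable R : realFieldType.
Variable C : finType.
Variables (K : {set {set C}}) (ent : {set C} -> R) (rk : {set C} -> nat).
Variables (T Crit : {set {set C}}) (d : {set C} -> option R).
Hypothesis filK : is_filtration K ent.
Hypothesis order_rk : compatible_order K ent rk.
Hypothesis T_def : forall e, e \in T <-> e \in edges K /\ ~ positive K rk e.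
Hypothesis Crit_def : forall e, e \in Crit <-> critical K ent rk e.
Hypothesis deaths : valid_deaths K ent T Crit d.

Lemma elenP (x : {set C}) (y : R) : (elen ent x <= 2%:R * y) = (ent x <= y).
Proof. by rewrite /elen ler_pM2l // ltr0n. Qed.

Lemma rk_ent s t : s \in K -> t \in K -> (rk s < rk t)%N -> ent s <= ent t.
Proof.
move=> sK tK lt; case: order_rk => _ ent_rk _; rewrite leNgt; apply/negP => /(ent_rk _ _ tK sK).
by move=> /(ltn_trans lt); rewrite ltnn.
Qed.

Lemma T_edge e : e \in T -> e \in edges K.
Proof. by move/T_def => []. Qed.

Lemma Crit_edge e : e \in Crit -> e \in edges K.
Proof. by move/Crit_def => []. Qed.

(* Critical edges are positive, hence not in the tree T. *)
Lemma Crit_notT e : e \in Crit -> e \notin T.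
Proof. by move/Crit_def => [_ [z [zc ez _]]]; apply/negP => /T_def [_]; apply; exists z. Qed.

Lemma tris_mono (b1 b2 : R) : b1 <= b2 -> tris (Q K ent b1) \subset tris (Q K ent b2).
Proof.
move=> le; apply/subsetP => t; rewrite !inE => /andP [/andP [tK tb] ->].
by rewrite tK (le_trans tb le).
Qed.

Lemma kerf_subspace (b : R) (U : {set {set C}}) : zsubspace (in_kerf K ent T b U).
Proof.
split=> [|w1 w2 [w1U [T1 [T1Q m1]]] [w2U [T2 [T2Q m2]]]].
  by split; [exact: sub0set | exists set0; rewrite bd2_0 sdiff0 !sub0set].
split; first exact: sdiff_sub.
exists (sdiff T1 T2); split; first exact: sdiff_sub.
by rewrite bd2_sdiff sdiffACA; apply: sdiff_sub.
Qed.

(* T carries no nonzero 1-cycle: the top-ranked edge of such a cycle would be positive. *)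
Lemma tree_acyclic (z : {set {set C}}) :
  z \subset T -> (forall v : C, ~~ odd #|[set e in z | v \in e]|) -> z = set0.
Proof.
move=> zT zeven; have [//|[e0 e0z]] := set_0Vmem z.
have [e ez emax] := arg_maxnP rk e0z.
have [eK] := (T_def e).1 (subsetP zT e ez); case; exists z; split=> //; split=> //.
apply/subsetP => f fz; have /T_edge := subsetP zT f fz; rewrite !inE => /andP [fK ->].
rewrite andbT; have [//|fe] := eqVneq f e; have fe_rk : (rk f <= rk e)%N := emax f fz.
rewrite fK /= ltn_neqAle fe_rk andbT.
have eK' : e \in K by move: eK; rewrite inE => /andP [].
by apply: contra_neq fe; case: order_rk => rk_inj _ _; apply: rk_inj.
Qed.

Lemma noncritical_relation e : e \in edges K -> e \notin T -> e \notin Crit ->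
  exists c Tr : {set {set C}},
    [/\ c \subset edges (before K rk e), Tr \subset tris (Q K ent (ent e))
       & [set e] = sdiff c (bd2 Tr)].
Proof.
move=> eK eT eC.
have [z [[zE zeven] ez]] : positive K rk e.
  by apply: NNPP => npos; move/negP: eT; apply; apply/T_def.
have [z' [[z'E _] [Tr [TrQ zz']]]] :
    exists z', cycle1 (before K rk e) z' /\ bound1 (Q K ent (ent e)) (sdiff z z').
  apply: NNPP => noz'; move/negP: eC; apply; apply/Crit_def; split => //.
  by exists z; split=> // z' z'c bz; apply: noz'; exists z'.
exists (sdiff (z :\ e) z'), Tr; split => //.
  apply: sdiff_sub z'E; apply/subsetP => f /setD1P [fe fz].
  by move: (subsetP zE f fz); rewrite !inE (negbTE fe).
by rewrite -zz' sdiffACA sdiffvv sdiff0 sdiff_setD1.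
Qed.

Lemma death_relation e b : e \in Crit -> d e = Some b ->
  exists c m Tr : {set {set C}},
    [/\ c \subset Uset ent Crit d b :\: [set f in Uset ent Crit d b | d f == Some b],
        m \subset MSTa ent T b, Tr \subset tris (Q K ent b)
      & [set e] = sdiff (sdiff c m) (bd2 Tr)].
Proof.
move=> eC de; have [b0 eb] := deaths.2 e b eC de.
set U := Uset ent Crit d b; set L := [set f in U | d f == Some b].
have eL : e \in L by rewrite /L /U !inE eC eb de /= ltxx eqxx.
have [w [[wU [Tr [TrQ wM]]] wL]] := leading_pivot (kerf_subspace b U) (deaths.1 b b0).1 eL.
have ew : e \in w by apply: (subsetP (subsetIl w L)); rewrite wL set11.
exists (w :\ e), (sdiff w (bd2 Tr)), Tr; split => //.
  apply/subsetP => f /setD1P [fe fw]; rewrite inE (subsetP wU f fw) andbT.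
  apply/negP => fL; have : f \in w :&: L by rewrite inE fw fL.
  by rewrite wL inE (negbTE fe).
by rewrite sdiffA sdiff_setD1 // sdiffK.
Qed.

Variable a : R.
Hypothesis a_ge0 : 0 <= a.
Notation Ha := (HoPeSa K ent T Crit d a).
Notation Qa := (Q K ent a).

Definition dead_by (f : {set C}) : bool := if d f is Some c then c <= a else false.

Lemma in_edgesH e : e \in edges Ha =
  ((e \in T) && (ent e <= a)) || [&& e \in Crit, ent e <= a & ~~ dead_by e].
Proof.
rewrite /edges /HoPeSa /MSTa !inE !elenP /dead_by.
case e2: (is_edge e).
  by move: e2; rewrite /is_edge => /eqP ->; rewrite /= andbF andbT.
rewrite andbF; apply/esym/negbTE/orP => -[/andP [/T_edge eK _] | /and3P [/Crit_edge eK _ _]];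
  by move: eK; rewrite inE e2 andbF.
Qed.

Lemma MSTa_H b : b <= a -> MSTa ent T b \subset edges Ha.
Proof.
move=> ba; apply/subsetP => e; rewrite inE elenP in_edgesH => /andP [-> eb].
by rewrite (le_trans eb ba).
Qed.

Definition Hrep (z : {set {set C}}) : Prop :=
  exists h Tr : {set {set C}}, [/\ h \subset edges Ha, Tr \subset tris Qa & z = sdiff h (bd2 Tr)].

Lemma Hrep_chain (h : {set {set C}}) : h \subset edges Ha -> Hrep h.
Proof. by move=> hH; exists h, set0; rewrite bd2_0 sdiff0 sub0set. Qed.

Lemma Hrep_bd2 (Tr : {set {set C}}) : Tr \subset tris Qa -> Hrep (bd2 Tr).
Proof. by move=> TrQ; exists set0, Tr; rewrite sdiffC sdiff0 sub0set. Qed.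

Lemma Hrep_sdiff (x y : {set {set C}}) : Hrep x -> Hrep y -> Hrep (sdiff x y).
Proof.
move=> [h1 [T1 [h1H T1Q ->]]] [h2 [T2 [h2H T2Q ->]]]; exists (sdiff h1 h2), (sdiff T1 T2).
by rewrite bd2_sdiff sdiffACA; split => //; apply: sdiff_sub.
Qed.

Lemma Hrep_subspace : zsubspace Hrep.
Proof. by split; [apply: Hrep_chain; rewrite sub0set | apply: Hrep_sdiff]. Qed.

Definition later (b : R) : {set {set C}} :=
  [set f in Crit | if d f is Some c then (b < c) && (c <= a) else false].

Lemma later_proper b c f : f \in Crit -> d f = Some c -> b < c -> c <= a ->
  later c \proper later b.
Proof.
move=> fC df bc ca; apply/properP; split.
  apply/subsetP => g; rewrite !inE => /andP [-> /=].
  by case: (d g) => // c' /andP [cc' ->]; rewrite (lt_trans bc cc').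
by exists f; rewrite !inE fC df ?bc ?ca //= ltxx.
Qed.

Lemma survivor_cases b f : b <= a ->
  f \in Uset ent Crit d b :\: [set g in Uset ent Crit d b | d g == Some b] ->
  f \in edges Ha \/ exists c, [/\ f \in Crit, d f = Some c, b < c & c <= a].
Proof.
move=> ba /setDP [fU]; rewrite inE fU /= => fnb.
move: fU; rewrite inE => /and3P [fC fb fnd].
have fa : ent f <= a := le_trans fb ba.
case df: (d f) => [c|]; last by left; rewrite in_edgesH fC fa /dead_by df orbT.
have [ca|ac] := boolP (c <= a).
  by right; exists c; split => //; move: fnd fnb; rewrite df /= -leNgt le_eqVlt eq_sym;
    case/orP => [/eqP ->|-> //]; rewrite eqxx.
by left; rewrite in_edgesH fC fa /dead_by df (negbTE ac) orbT.
Qed.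

Lemma dead_rep e b : e \in Crit -> d e = Some b -> b <= a -> Hrep [set e].
Proof.
have [n] := ubnP #|later b|; elim: n e b => // n IH e b lt eC de ba; rewrite ltnS in lt.
have [c [m [Tr [cUL mM TrQ ->]]]] := death_relation eC de.
apply: Hrep_sdiff; last exact: Hrep_bd2 (subset_trans TrQ (tris_mono ba)).
apply: Hrep_sdiff; last exact: Hrep_chain (subset_trans mM (MSTa_H ba)).
apply: subspace_span Hrep_subspace _ => f /(subsetP cUL) /(survivor_cases ba).
case=> [fH|[c' [fC df bc ca]]]; first by apply: Hrep_chain; rewrite sub1set.
exact: IH (leq_trans (proper_card (later_proper fC df bc ca)) lt) fC df ca.
Qed.

Lemma edge_rep e : e \in edges Qa -> Hrep [set e].
Proof.
have [n] := ubnP (rk e); elim: n e => // n IH e lt eQ; rewrite ltnS in lt.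
move: (eQ); rewrite !inE => /andP [/andP [eK ea] e2].
have eKe : e \in edges K by rewrite inE eK e2.
have [eT|eT] := boolP (e \in T); first by apply: Hrep_chain; rewrite sub1set in_edgesH eT ea.
have [eC|eC] := boolP (e \in Crit).
  case de: (d e) => [b|].
    have [ba|ab] := boolP (b <= a); first exact: dead_rep eC de ba.
    by apply: Hrep_chain; rewrite sub1set in_edgesH eC ea /dead_by de (negbTE ab) orbT.
  by apply: Hrep_chain; rewrite sub1set in_edgesH eC ea /dead_by de orbT.
have [c [Tr [cE TrQ ->]]] := noncritical_relation eKe eT eC.
apply: Hrep_sdiff; last exact: Hrep_bd2 (subset_trans TrQ (tris_mono ea)).
apply: subspace_span Hrep_subspace _ => f /(subsetP cE); rewrite !inE => /andP [/andP [fK fe] f2].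
apply: IH; first exact: leq_trans fe lt.
by rewrite !inE fK f2 (le_trans (rk_ent fK eK fe) ea).
Qed.

(* HoPeS(C;a) is a subcomplex of Q(C;a): its vertices enter at 0, its edges by a. *)
Lemma skeleton_sub : Ha \subset Qa.
Proof.
apply/subsetP => s; rewrite /HoPeSa !inE elenP.
case/orP => [/orP [/andP [sK /cards1P [x ->]] | /andP [/T_edge]] | /andP [/Crit_edge]].
- by case: filK => _ _ singletons _ _; have [xK ->] := singletons x; rewrite xK.
- by rewrite inE => /andP [-> _].
- by rewrite inE => /andP [-> _] /andP [].
Qed.

(* A cycle of HoPeS(C;a) bounding in Q(C;a) lies in T: its critical part is a kernel
   vector of f at scale a supported on free (non-dying) variables. *)
Lemma bounding_cycle_in_T z : cycle1 Ha z -> bound1 Qa z -> z \subset T.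
Proof.
move=> [zH _] [Tr [TrQ zE]].
set U := Uset ent Crit d a; set L := [set f in U | d f == Some a].
pose w := [set f in z | f \notin T].
have wUL : w \subset U :\: L.
  apply/subsetP => f; rewrite inE => /andP [fz fT].
  move: (subsetP zH f fz); rewrite in_edgesH (negbTE fT) /= => /and3P [fC fa].
  rewrite /dead_by /L /U !inE fC fa /=; case: (d f) => [c|] //=.
  rewrite -ltNge => ac; rewrite (lt_gtF ac) /= andbT.
  by apply/eqP => -[ca]; move: ac; rewrite ca ltxx.
have kw : in_kerf K ent T a U w.
  split; first exact: subset_trans wUL (subsetDl _ _).
  exists Tr; split => //; rewrite -zE; apply/subsetP => f.
  rewrite in_sdiff !inE; case fz: (f \in z) => //=; rewrite addbT negbK => fT.
  rewrite fT elenP /=; move: (subsetP zH f fz); rewrite in_edgesH fT /=.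
  by case/orP => [//| /andP [/Crit_notT]]; rewrite fT.
have w0 := free_kernel_trivial (deaths.1 a a_ge0).1 kw wUL.
apply/subsetP => f fz; apply: contraT => fT.
have : f \in w by rewrite inE fz fT.
by rewrite w0 inE.
Qed.

Lemma skeleton_inj z : cycle1 Ha z -> bound1 Qa z -> bound1 Ha z.
Proof.
move=> zc zb; rewrite (tree_acyclic (bounding_cycle_in_T zc zb) zc.2).
by exists set0; rewrite bd2_0 sub0set.
Qed.

Lemma skeleton_surj z : cycle1 Qa z -> exists z', cycle1 Ha z' /\ bound1 Qa (sdiff z z').
Proof.
move=> [zQ zeven].
have [h [Tr [hH TrQ zE]]] : Hrep z.
  by apply: subspace_span Hrep_subspace _ => e /(subsetP zQ) /edge_rep.
exists h; split; last by exists Tr; rewrite zE sdiffC sdiffA sdiffvv sdiffC sdiff0.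
have hE : h = sdiff z (bd2 Tr) by rewrite zE sdiffK.
split => // v; rewrite hE sdiff_pred odd_sdiff (negbTE (zeven v)) /=.
by apply: bd2_even => t /(subsetP TrQ); rewrite inE => /andP [].
Qed.

Lemma skeleton_H1_iso : H1_incl_iso Ha Qa.
Proof. by split; [exact: skeleton_sub | exact: skeleton_inj | exact: skeleton_surj]. Qed.

End Skeleton.

Theorem mainTheorem6 (R : realFieldType) (C : finType) (K : {set {set C}})
    (ent : {set C} -> R) (rk : {set C} -> nat) (T Crit : {set {set C}})
    (d : {set C} -> option R) :
  is_filtration K ent ->
  compatible_order K ent rk ->
  is_MST K ent T ->
  (forall e, e \in T <-> e \in edges K /\ ~ positive K rk e) ->
  (forall e, e \in Crit <-> critical K ent rk e) ->
  valid_deaths K ent T Crit d ->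
  forall a : R, 0 <= a -> H1_incl_iso (HoPeSa K ent T Crit d a) (Q K ent a).
Proof.
move=> filK order_rk _ T_def Crit_def deaths a a_ge0.
exact (skeleton_H1_iso filK order_rk T_def Crit_def deaths a_ge0).
Qed.
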